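(* Let $k\ge 1$ and $B=\{p_1,p_1',\dots,p_k,p_k'\}$ be $2k$ distinct vertices. Let $C_B$ be the cycle multi-graph on $B$ with edges $(p_1,p_1'),(p_1',p_2),(p_2,p_2'),\dots,(p_k,p_k'),(p_k',p_1)$, and let $\tilde C_B$ be obtained from $C_B$ by adding a second parallel copy of each edge $(p_i,p_i')$, $i\in[k]$ (so every vertex of $\tilde C_B$ has degree $3$). Let $\tilde E_B$ be a set of $k$ edges with endpoints in $B$ such that every vertex of $B$ is an endpoint of exactly one edge of $\tilde E_B$, and let $H_{(B,\tilde E_B)}$ be the $4$-regular multi-graph obtained from $\tilde C_B$ by adding the edges $\tilde E_B$. Let $G_B$ be the simple graph with vertex set $B$ and edges $\{(p_i,p_i'):i\in[k]\}$. Then for any Eulerian tour $U$ on $H_{(B,\tilde E_B)}$, $\mathcal{A}(U)=G_B$ if and only if $\tilde E_B=\{(p_i,p_i'): i\in[k]\}$.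
   Context: A tour is a closed walk without repeated edges; an Eulerian tour on a connected multi-graph $F$ is a tour using every edge of $F$ exactly once. If $F$ is a connected $4$-regular multi-graph on $n$ vertices and $U=x_1e_1x_2\dots x_{2n}e_{2n}x_1$ is an Eulerian tour, its induced double-occurrence word is $m(U)=x_1x_2\cdots x_{2n}$. The alternance graph $\mathcal{A}(U)$ is the simple graph on $V(F)$ in which $u\neq v$ are adjacent iff $u$ and $v$ alternate in $m(U)$, i.e. $m(U)$ has the form $\dots u\dots v\dots u\dots v\dots$ or $\dots v\dots u\dots v\dots u\dots$. *)

From mathcomp Require Import all_boot.
Set Implicit Arguments. Unset Strict Implicit. Unset Printing Implicit Defensive.

(* Vertex set B: (i,false) stands for p_i, (i,true) stands for p_i'. *)
Definition vert (k : nat) : finType := ('I_k * bool)%type.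

Definition p {k} (i : 'I_k) : vert k := (i, false).
Definition p' {k} (i : 'I_k) : vert k := (i, true).

(* Multi-graphs on a vertex type are given by a list of edges; each edge is
   the (unordered) set of its two endpoints. Parallel edges = repeated entries. *)

Definition C_B_edges (k : nat) : seq {set vert k} :=
  [seq [set p i; p' i] | i <- enum 'I_k] ++
  [seq [set p' i; p (ordS i)] | i <- enum 'I_k].

Definition tC_B_edges (k : nat) : seq {set vert k} :=
  C_B_edges k ++ [seq [set p i; p' i] | i <- enum 'I_k].

Definition H_edges (k : nat) (Et : {set {set vert k}}) : seq {set vert k} :=
  tC_B_edges k ++ enum Et.

(* Eulerian tour x_1 e_1 x_2 ... x_m e_m x_1 on the multigraph with edge list E:
   xs = [x_1;...;x_m], es = [e_1;...;e_m] (edge indices into E), every edge used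
   exactly once, and e_j joins x_j and x_{j+1} (indices cyclic). *)
Definition eulerian_tour (V : finType) (E : seq {set V}) (xs : seq V) (es : seq nat) : Prop :=
  perm_eq es (iota 0 (size E)) /\
  all2 (fun e xy => nth set0 E e == [set xy.1; xy.2]) es (zip xs (rot 1 xs)).

Definition alternate (V : eqType) (w : seq V) (u v : V) : Prop :=
  exists i j l m, [/\ i < j, j < l, l < m & m < size w] /\
   ((nth u w i = u /\ nth u w j = v /\ nth u w l = u /\ nth u w m = v) \/
    (nth u w i = v /\ nth u w j = u /\ nth u w l = v /\ nth u w m = u)).

(* Alternance graph of the tour whose induced double occurrence word is w. *)
Definition alternance (V : eqType) (w : seq V) (u v : V) : Prop :=
  u <> v /\ alternate w u v.

Definition G_B (k : nat) (u v : vert k) : Prop := u <> v /\ u.1 = v.1.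

Definition canon_match (k : nat) : {set {set vert k}} :=
  [set [set p i; p' i] | i : 'I_k].

From mathcomp Require Import all_boot zify.
Set Implicit Arguments. Unset Strict Implicit. Unset Printing Implicit Defensive.

(* Read the tour as an n-periodic word in which, H being 4-regular, every vertex
   occurs exactly twice.  The steps of the walk that enter or leave a vertex set X
   are exactly the edges of H crossing X, and if some u in X and v outside X
   alternate, the word enters and leaves X at least four times.

   If Et is the canonical matching, each rung {p_i, p_i'} is crossed by only two
   edges of H, so vertices of different rungs never alternate; and the edge
   p_i p_i' has multiplicity three, so some occurrence of p_i is flanked by p_i'
   on both sides, which makes p_i and p_i' alternate.

   Conversely, if A(U) = G_B then every rung is a clique of the alternance graph
   with no alternance edge leaving it, and H minus the rung is connected.  Then all
   vertices outside the rung occur on a single arc between two visits of the rung,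
   so the rung is crossed by only two edges; a rung missing from Et would be
   crossed by four. *)

Definition changes (f : nat -> bool) (a b : nat) :=
  count (fun t => f t != f t.+1) (iota a (b - a)).

Lemma changes_cat f a b c : a <= b -> b <= c -> changes f a c = changes f a b + changes f b c.
Proof.
move=> hab hbc; rewrite /changes -count_cat.
have -> : iota b (c - b) = iota (a + (b - a)) (c - b) by rewrite subnKC.
by rewrite -iotaD; congr (count _ (iota _ _)); lia.
Qed.

Lemma changes_gt0 f a b : a <= b -> f a != f b -> 0 < changes f a b.
Proof.
elim: b => [|b IH]; first by rewrite leqn0 => /eqP ->; rewrite eqxx.
rewrite leq_eqVlt => /orP[/eqP ->|hab]; first by rewrite eqxx.
rewrite (@changes_cat f a b b.+1) // => hne.
have [fab|/(IH hab)] := eqVneq (f a) (f b); last by lia.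
by rewrite /changes subSnn /= -fab hne; lia.
Qed.

Lemma changes_const f a b : (forall t, a <= t <= b -> f t = f a) -> changes f a b = 0.
Proof.
move=> fa; apply/eqP; rewrite -leqn0 leqNgt -has_count; apply/hasP => -[t].
by rewrite mem_iota => tab; rewrite !fa ?eqxx //; lia.
Qed.

Lemma changes_const_le1 f a b : a < b -> (forall t, a <= t < b -> f t = f a) ->
  changes f a b <= 1.
Proof.
move=> ab fa; rewrite (@changes_cat f a b.-1 b); [|lia|lia].
rewrite changes_const => [|t ht]; last by apply: fa; lia.
rewrite /changes; have -> : b - b.-1 = 1 by lia.
by rewrite /=; case: (_ != _).
Qed.

Lemma changes_interval_le2 (f : nat -> bool) n a b : 0 < a -> a < b -> b <= n ->
  (forall t, t < a -> f t) -> (forall t, a <= t < b -> ~~ f t) -> (forall t, b <= t <= n -> f t) ->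
  changes f 0 n <= 2.
Proof.
move=> a0 ab bn fl fm fr.
rewrite (@changes_cat f 0 a n) ?(@changes_cat f a b n); [|lia..].
have -> : changes f b n = 0 by apply: changes_const => t ht; rewrite !fr //; lia.
have : changes f 0 a <= 1 by apply: changes_const_le1 => // t ht; rewrite !fl //; lia.
have : changes f a b <= 1.
  by apply: changes_const_le1 => // t ht; rewrite (negbTE (fm t _)) ?(negbTE (fm a _)) //; lia.
lia.
Qed.

Definition alternating (V : Type) n (y : nat -> V) (u v : V) :=
  exists i j l m, [/\ i < j, j < l, l < m & m < n] /\
   ((y i = u /\ y j = v /\ y l = u /\ y m = v) \/
    (y i = v /\ y j = u /\ y l = v /\ y m = u)).

Lemma eq_alternating (V : Type) n (y y' : nat -> V) u v : y =1 y' ->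
  alternating n y u v -> alternating n y' u v.
Proof. by move=> e [i [j [l [m [h H]]]]]; exists i, j, l, m; split => //; rewrite -!e. Qed.

Lemma alternating_shift1 (V : Type) n (y : nat -> V) u v : y n = y 0 ->
  alternating n y u v <-> alternating n (fun t => y t.+1) u v.
Proof.
move=> yn; split=> -[i [j [l [m [[ij jl lm mn] H]]]]].
- case: i ij H => [|i] ij H.
    exists j.-1, l.-1, m.-1, n.-1; split; first by split; lia.
    rewrite !prednK ?yn; [|lia..].
    by case: H => [[a [b [c d]]]|[a [b [c d]]]]; [right|left].
  by exists i, j.-1, l.-1, m.-1; split; [split; lia | rewrite !prednK; [exact: H|lia..]].
- have [mn'|mn'] : m.+1 < n \/ m.+1 = n by lia.
    by exists i.+1, j.+1, l.+1, m.+1; split; first by split; lia.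
  exists 0, i.+1, j.+1, l.+1; split; first by split; lia.
  by rewrite -yn -mn'; case: H => [[a [b [c d]]]|[a [b [c d]]]]; [right|left].
Qed.

Lemma alternating_shift (V : Type) n (y : nat -> V) u v r : (forall t, y (t + n) = y t) ->
  alternating n y u v <-> alternating n (fun t => y (t + r)) u v.
Proof.
move=> yper; elim: r => [|r IH]; first by split; apply: eq_alternating => t; rewrite addn0.
rewrite IH (alternating_shift1 (y := fun t => y (t + r))); last by rewrite add0n addnC yper.
by split; apply: eq_alternating => t; rewrite addSnnS.
Qed.

Lemma changes_alternating (V : Type) n (y : nat -> V) (P : V -> bool) u v :
  y n = y 0 -> P u != P v -> alternating n y u v -> 4 <= changes (fun t => P (y t)) 0 n.
Proof.
move=> yn Puv [i [j [l [m [[ij jl lm mn] H]]]]]; set f := fun t => P (y t).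
have [fij fjl flm fmi] : [/\ f i != f j, f j != f l, f l != f m & f m != f i].
  have Pvu : P v != P u by rewrite eq_sym.
  by rewrite /f; case: H => [[-> [-> [-> ->]]]|[-> [-> [-> ->]]]].
rewrite (@changes_cat f 0 i n) ?(@changes_cat f i j n) ?(@changes_cat f j l n)
  ?(@changes_cat f l m n); [|lia..].
have := changes_gt0 (ltnW ij) fij; have := changes_gt0 (ltnW jl) fjl.
have := changes_gt0 (ltnW lm) flm.
suff : 0 < changes f 0 i + changes f m n by lia.
have [fmn|/(changes_gt0 (ltnW mn))] := eqVneq (f m) (f n); last by lia.
have : f 0 != f i by rewrite /f -yn -/(f n) -fmn.
by move/(changes_gt0 (leq0n i)); lia.
Qed.

Lemma count_iota_periodic (P : pred nat) n r : (forall t, P (t + n) = P t) ->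
  count P (iota r n) = count P (iota 0 n).
Proof.
move=> Pper; elim: r => [//|r <-]; case: n Pper => [//|n] Pper.
have -> : iota r.+1 n.+1 = iota r.+1 n ++ [:: r.+1 + n] by rewrite -[n.+1]addn1 iotaD.
rewrite count_cat /= addn0 addSnnS Pper; lia.
Qed.

Definition crossing (V : finType) (X : {set V}) (e : {set V}) :=
  [exists a in e, a \in X] && [exists a in e, a \notin X].

Lemma crossing_set2 (V : finType) (X : {set V}) a b :
  crossing X [set a; b] = ((a \in X) != (b \in X)).
Proof.
rewrite /crossing; apply/andP/idP => [[/existsP[c /andP[c_ab cX]] /existsP[d /andP[d_ab dX]]]|].
  by move: c_ab d_ab cX dX; rewrite !inE => /orP[]/eqP-> /orP[]/eqP->; do 2!case: (_ \in X).
by case aX: (a \in X); case bX: (b \in X) => // _;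
  split; apply/existsP; [exists a|exists b|exists b|exists a]; rewrite !inE eqxx ?orbT ?aX ?bX.
Qed.

Lemma set2_eq_set2 (V : finType) (v w a b : V) : v != w -> [set v; w] = [set a; b] ->
  (a = v /\ b = w) \/ (a = w /\ b = v).
Proof.
move=> vw e.
have : a \in [set v; w] by rewrite e set21.
have : b \in [set v; w] by rewrite e set22.
have : v \in [set a; b] by rewrite -e set21.
have : w \in [set a; b] by rewrite -e set22.
rewrite !inE => /orP[]/eqP wa /orP[]/eqP va /orP[]/eqP bv /orP[]/eqP av; subst;
  rewrite ?eqxx in vw; auto.
Qed.

Lemma set2_eq_set2l (V : finType) (a b u : V) : a != b -> [set u; a] = [set a; b] -> u = b.
Proof.
move=> ab /esym/(set2_eq_set2 ab)[[_ ab']|[] //].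
by rewrite ab' eqxx in ab.
Qed.

Lemma set2_eq_set2r (V : finType) (a b w : V) : a != b -> [set a; w] = [set a; b] -> w = b.
Proof. by rewrite setUC; apply: set2_eq_set2l. Qed.

Lemma count_leq_uniq_sub (T : eqType) (P : pred T) s r : uniq s ->
  {in s, forall x, P x -> x \in r} -> count P s <= count P r.
Proof.
move=> s_uniq sr; rewrite -!size_filter; apply: uniq_leq_size; first exact: filter_uniq.
by move=> x; rewrite !mem_filter => /andP[Px xs]; rewrite Px sr.
Qed.

(* [y] is [n]-periodic and its steps [{y t, y t.+1}], [t < n], form the multiset [E];
   equality of multisets is expressed by equal counts for every predicate. *)
Definition euler_walk (V : finType) (E : seq {set V}) (n : nat) (y : nat -> V) :=
  [/\ 0 < n, (forall e, e \in E -> #|e| = 2), (forall t, y (t + n) = y t) &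
      forall P : pred {set V}, count P E = count (fun t => P [set y t; y t.+1]) (iota 0 n)].

Definition occ (V : eqType) n (y : nat -> V) (v : V) := count (fun t => y t == v) (iota 0 n).

Section EulerWalk.
Variables (V : finType) (E : seq {set V}) (n : nat) (y : nat -> V).
Hypothesis walk : euler_walk E n y.

Lemma walk_gt0 : 0 < n. Proof. by case: walk. Qed.
Lemma walk_card2 e : e \in E -> #|e| = 2. Proof. by case: walk => _ h _ _; apply: h. Qed.
Lemma walk_periodic t : y (t + n) = y t. Proof. by case: walk. Qed.
Lemma walk_count (P : pred {set V}) :
  count P E = count (fun t => P [set y t; y t.+1]) (iota 0 n).
Proof. by case: walk => _ _ _ ->. Qed.

Lemma walk_closed : y n = y 0.
Proof. by rewrite -{1}[n]add0n walk_periodic. Qed.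

Lemma walk_mod t : y t = y (t %% n).
Proof.
rewrite {1}(divn_eq t n) addnC; elim: (t %/ n) => [|q IH]; first by rewrite addn0.
by rewrite mulSn [n + _]addnC addnA walk_periodic.
Qed.

Lemma walk_step_edge t : [set y t; y t.+1] \in E.
Proof.
have : has (pred1 [set y t; y t.+1]) E.
  rewrite has_count walk_count -has_count; apply/hasP; exists (t %% n).
    by rewrite mem_iota add0n ltn_mod walk_gt0.
  by rewrite /= [y (t %% n).+1]walk_mod -addn1 modnDml addn1 -!walk_mod.
by case/hasP => e eE /eqP <-.
Qed.

Lemma walk_step_neq t : y t != y t.+1.
Proof. by have := walk_card2 (walk_step_edge t); rewrite cards2; case: (_ != _). Qed.

Lemma walk_edge_step e : e \in E -> exists2 t, t < n & e = [set y t; y t.+1].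
Proof.
move=> eE; have : has (pred1 e) E by apply/hasP; exists e => /=.
rewrite has_count walk_count -has_count => /hasP[t]; rewrite mem_iota add0n => tn /eqP <-.
by exists t.
Qed.

Lemma walk_degree (v : V) : count (fun e : {set V} => v \in e) E = (occ n y v).*2.
Proof.
have occS : occ n y v = count (fun t => y t.+1 == v) (iota 0 n).
  rewrite /occ -(@count_iota_periodic (fun t => y t == v) n 1) => [|t].
    by rewrite (iotaDl 1 0) count_map.
  by rewrite walk_periodic.
rewrite walk_count -addnn {2}occS -count_predUI.
have -> : count (predI (fun t => y t == v) (fun t => y t.+1 == v)) (iota 0 n) = 0.
  apply/eqP; rewrite -leqn0 leqNgt -has_count; apply/hasP => -[t _ /andP[/eqP yt /eqP yt1]].
  by have := walk_step_neq t; rewrite yt yt1 eqxx.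
by rewrite addn0; apply: eq_count => t /=; rewrite !inE ![v == _]eq_sym.
Qed.

Lemma walk_crossing X : count (crossing X) E = changes (fun t => y t \in X) 0 n.
Proof. by rewrite walk_count /changes subn0; apply: eq_count => t; rewrite crossing_set2. Qed.

End EulerWalk.

Lemma euler_walk_shift (V : finType) (E : seq {set V}) n y r :
  euler_walk E n y -> euler_walk E n (fun t => y (t + r)).
Proof.
move=> walk; split; [exact: walk_gt0 walk|exact: walk_card2 walk| |].
  by move=> t; rewrite addnAC (walk_periodic walk).
move=> P; rewrite (walk_count walk).
rewrite -(@count_iota_periodic (fun t => P [set y t; y t.+1]) n r) => [|t]; last first.
  by rewrite (walk_periodic walk) -addSn (walk_periodic walk).
by rewrite -{1}[r]addn0 iotaDl count_map; apply: eq_count => t /=; rewrite addnC addSn.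
Qed.

Lemma occ_shift (V : eqType) n (y : nat -> V) r v : (forall t, y (t + n) = y t) ->
  occ n (fun t => y (t + r)) v = occ n y v.
Proof.
move=> yper; rewrite /occ -(@count_iota_periodic (fun t => y t == v) n r) => [|t]; last first.
  by rewrite yper.
have -> : iota r n = map (addn r) (iota 0 n) by rewrite -iotaDl addn0.
by rewrite count_map; apply: eq_count => t /=; rewrite addnC.
Qed.

Lemma occ_gt0 (V : eqType) n (y : nat -> V) v : 0 < occ n y v -> exists2 t, t < n & y t = v.
Proof. by rewrite /occ -has_count => /hasP[t]; rewrite mem_iota add0n => tn /eqP; exists t. Qed.

Section TwiceVisited.
Variables (V : eqType) (n : nat) (y : nat -> V) (v : V).
Hypothesis occ_v : occ n y v = 2.

Lemma occ2_other p : exists q, [/\ q < n, q != p & y q = v].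
Proof.
have [|none] := boolP (has (fun q => (y q == v) && (q != p)) (iota 0 n)).
  by case/hasP => q; rewrite mem_iota add0n => qn /andP[/eqP yq qp]; exists q.
have : count (fun t => y t == v) (iota 0 n) <= 1.
  rewrite -size_filter -[1]/(size [:: p]); apply: uniq_leq_size.
    by rewrite filter_uniq ?iota_uniq.
  move=> t; rewrite mem_filter => /andP[yt tn]; move/hasPn: none => /(_ t tn).
  by rewrite yt /= negbK inE.
by move: occ_v; rewrite /occ => ->.
Qed.

Lemma occ2_only p q t : p != q -> p < n -> q < n -> y p = v -> y q = v ->
  t < n -> y t = v -> t = p \/ t = q.
Proof.
move=> pq pn qn yp yq tn yt; apply/pred2P; apply/negPn/negP; rewrite negb_or => /andP[tp tq].
have : size [:: p; q; t] <= count (fun t => y t == v) (iota 0 n).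
  rewrite -size_filter; apply: uniq_leq_size.
    by rewrite /= !inE negb_or pq ![_ == t]eq_sym tp tq.
  by move=> s; rewrite !inE mem_filter mem_iota add0n => /or3P[]/eqP->; rewrite ?yp ?yq ?yt eqxx.
by move: occ_v; rewrite /occ => ->.
Qed.

End TwiceVisited.

Section CyclicWord.
Variables (V : eqType) (x0 : V) (xs : seq V).
Let n := size xs.
Let y t := nth x0 xs (t %% n).

Lemma cyclic_wordE : xs = map y (iota 0 n).
Proof.
rewrite -{1}(mkseq_nth x0 xs); apply/eq_in_map => t.
by rewrite mem_iota add0n /y => /andP[_ tn]; rewrite modn_small.
Qed.

Lemma rot1_cyclic_wordE : 0 < n -> rot 1 xs = map (fun t => y t.+1) (iota 0 n).
Proof.
rewrite /y /n; case: xs => [|x s] // _; rewrite rot1_cons; apply: (@eq_from_nth _ x0).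
  by rewrite size_rcons size_map size_iota.
move=> i; rewrite size_rcons => hi.
rewrite (nth_map 0) ?size_iota // nth_iota // add0n nth_rcons /=.
case: (ltngtP i (size s)) => [lt|gt|->]; first by rewrite modn_small.
  by move: hi; rewrite ltnS leqNgt gt.
by rewrite modnn.
Qed.

Lemma alternate_cyclic_word u v : alternate xs u v <-> alternating n y u v.
Proof.
have nth_y t (d : V) : t < n -> nth d xs t = y t.
  by move=> tn; rewrite /y modn_small // (set_nth_default x0).
split=> -[i [j [l [m [[ij jl lm mn] H]]]]]; exists i, j, l, m; split => //.
  by rewrite -!(nth_y _ u); [exact: H|lia..].
by rewrite !(nth_y _ u); [exact: H|lia..].
Qed.

End CyclicWord.

Lemma eulerian_tour_walk (V : finType) (E : seq {set V}) xs es (x0 : V) :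
  (forall e, e \in E -> #|e| = 2) -> 0 < size xs -> eulerian_tour E xs es ->
  euler_walk E (size xs) (fun t => nth x0 xs (t %% size xs)).
Proof.
move=> E2 xs0 [es_perm es_steps]; split => // [t|P]; first by rewrite modnDr.
have steps : map (nth set0 E) es = map (fun xy => [set xy.1; xy.2]) (zip xs (rot 1 xs)).
  by elim: es (zip _ _) {es_perm} es_steps => [|e s IH] [|xy t] //= /andP[/eqP -> /IH ->].
rewrite -{1}(mkseq_nth set0 E) /mkseq -((permP (perm_map (nth set0 E) es_perm)) P) steps.
by rewrite {1}(cyclic_wordE x0 xs) (rot1_cyclic_wordE x0 xs0) zip_map !count_map.
Qed.

Lemma eulerian_tour_size (V : finType) (E : seq {set V}) xs es :
  eulerian_tour E xs es -> size xs = size E.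
Proof.
case=> /perm_size; rewrite size_iota => <-; rewrite all2E => /andP[/eqP -> _].
by rewrite size_zip size_rot minnn.
Qed.

Definition connected_in (V : finType) (E : seq {set V}) (Y : {set V}) :=
  forall S : V -> Prop, (exists2 v, v \in Y & S v) ->
    (forall v w, S v -> w \in Y -> [set v; w] \in E -> S w) -> {in Y, forall w, S w}.

Section IsolatedClique.
Variables (V : finType) (E : seq {set V}) (n : nat) (y : nat -> V) (X : {set V}).
Hypothesis walk : euler_walk E n y.
Hypothesis occ2 : forall v, occ n y v = 2.
Hypothesis X_isolated : forall u w, u \in X -> w \notin X -> ~ alternating n y u w.
Hypothesis X_clique : {in X &, forall c d, c != d -> alternating n y c d}.
Hypothesis y0X : y 0 \in X.

(* With [c := y 0] and [d := y s], every placement of the second occurrences of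
   [c] and [d] makes one of them alternate with [v], or [c] and [d] not alternate. *)
Lemma clique_not_between v t s t' : v \notin X -> 0 < t -> t < s -> s < t' -> t' < n ->
  y t = v -> y t' = v -> y s \notin X.
Proof.
move=> vX t0 ts st' t'n yt yt'; apply/negP => ysX.
have outside u i j : u \in X -> y i = u -> y j = u -> i < n -> i < t \/ t' < i -> t < j < t' ->
    False.
  move=> uX yi yj i_n ij jt; apply: (X_isolated uX vX).
  case: ij => [it|t'i]; first by exists i, t, j, t'; split; [split; lia|left].
  by exists t, j, t', i; split; [split; lia|right].
set c := y 0; set d := y s.
have [cd|cd] := eqVneq c d.
  by apply: (outside c 0 s y0X (erefl c) (esym cd) (walk_gt0 walk) (or_introl t0)); rewrite ts.
have [s2 [s2n s2s ys2]] := occ2_other (occ2 d) s.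
have s2_in : t < s2 < t'.
  have : s2 != t by apply: contraTneq ysX => e; rewrite -/d -ys2 e yt.
  have : s2 != t' by apply: contraTneq ysX => e; rewrite -/d -ys2 e yt'.
  have : ~ (s2 < t \/ t' < s2) by move=> s2_out; apply: (outside d s2 s ysX) => //; lia.
  lia.
have [r [rn r0 yr]] := occ2_other (occ2 c) 0.
have r_out : r < t \/ t' < r.
  have : r != t by apply: contraTneq y0X => e; rewrite -/c -yr e yt.
  have : r != t' by apply: contraTneq y0X => e; rewrite -/c -yr e yt'.
  have : ~ (t < r < t') by apply: (outside c 0 r y0X (erefl c) yr (walk_gt0 walk) (or_introl t0)).
  lia.
have [i [j [l [m [[ij jl lm mn] H]]]]] := X_clique y0X ysX cd.
have oc := occ2_only (occ2 c) r0 rn (walk_gt0 walk) yr (erefl c).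
have od := occ2_only (occ2 d) s2s s2n (ltn_trans st' t'n) ys2 (erefl d).
case: H => [[yi [yj [yl ym]]]|[yi [yj [yl ym]]]].
  by have := oc i _ yi; have := oc l _ yl; have := od j _ yj; have := od m _ ym; lia.
by have := oc j _ yj; have := oc m _ ym; have := od i _ yi; have := od l _ yl; lia.
Qed.

Section Run.
Variables a b : nat.
Hypotheses (a_gt0 : 0 < a) (ab : a < b) (bn : b <= n).
Hypothesis before_run : forall t, t < a -> y t \in X.
Hypothesis in_run : forall t, a <= t < b -> y t \notin X.
Hypothesis ybX : y b \in X.

Definition visited_in_run v := exists t, a <= t < b /\ y t = v.

Lemma run_occurrences v : visited_in_run v -> forall t, t < n -> y t = v -> a <= t < b.
Proof.
move=> [t1 [t1run <-]] t tn yt.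
have vX := in_run t1run; rewrite -yt in vX.
have [ta|at_] := ltnP t a; first by rewrite before_run in vX.
have [tb|bt] := ltnP t b; first by apply/andP.
have bt' : b < t by rewrite ltn_neqAle bt andbT; apply: contraTneq ybX => ->.
have t1_gt0 : 0 < t1 by lia.
have t1b : t1 < b by case/andP: t1run.
by move: ybX; rewrite (negbTE (clique_not_between vX t1_gt0 t1b bt' tn (esym yt) erefl)).
Qed.
Lemma run_adjacent v w : visited_in_run v -> w \notin X -> [set v; w] \in E ->
  visited_in_run w.
Proof.
move=> vrun wX vwE; have [t tn vw_step] := walk_edge_step walk vwE.
have vX : v \notin X by case: vrun => t1 [/in_run + <-].
have vw : v != w by have := walk_card2 walk vwE; rewrite cards2; case: (v != w).
have [[ytv yt1w]|[ytw yt1v]] := set2_eq_set2 vw vw_step.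
  have /andP[at_ tb] := run_occurrences vrun tn ytv.
  exists t.+1; split => //; apply/andP; split; first exact: leqW.
  by rewrite ltn_neqAle tb andbT; apply: contraTneq ybX => <-; rewrite yt1w.
have t1n : t.+1 < n.
  by rewrite ltn_neqAle tn andbT; apply: contraTneq y0X => e; rewrite -(walk_closed walk) -e yt1v.
have /andP[at1 t1b] := run_occurrences vrun t1n yt1v.
exists t; split => //; apply/andP; split; last exact: ltnW.
by rewrite -ltnS ltn_neqAle at1 andbT; apply: contraNneq wX => e; rewrite -ytw before_run // e.
Qed.

End Run.

Lemma isolated_clique_changes_le2 :
  connected_in E (~: X) -> changes (fun t => y t \in X) 0 n <= 2.
Proof.
move=> conn; have yn := walk_closed walk.
have [out|all_in] := boolP [exists t : 'I_n, y t \notin X]; last first.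
  rewrite changes_const // => t /andP[_]; rewrite y0X leq_eqVlt => /predU1P[->|tn].
    by rewrite yn.
  by move: all_in; rewrite negb_exists => /forallP/(_ (Ordinal tn))/negPn.
have exP : exists t, (t < n) && (y t \notin X).
  by case/existsP: out => t tX; exists t; rewrite ltn_ord.
have [a /andP[an aX] a_min] := find_ex_minn exP.
have before t : t < a -> y t \in X.
  move=> ta; apply/negPn/negP => tX.
  by have := a_min t; rewrite tX (ltn_trans ta an) => /(_ isT); lia.
have a_gt0 : 0 < a by case: (posnP a) aX => // ->; rewrite y0X.
have exQ : exists t, (a < t) && (y t \in X) by exists n; rewrite an yn y0X.
have [b /andP[ab bX] b_min] := find_ex_minn exQ.
have bn : b <= n by apply: b_min; rewrite an yn y0X.
have run t : a <= t < b -> y t \notin X.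
  case/andP => at_ tb; case: (ltngtP a t) at_ => // [at_|<-] _ //.
  by apply/negP => tX; have := b_min t; rewrite at_ tX => /(_ isT); lia.
have covered : {in ~: X, forall w, visited_in_run a b w}.
  apply: conn => [|v w vrun]; first by exists (y a); [rewrite inE | exists a; rewrite leqnn ab].
  by rewrite inE; apply: run_adjacent.
apply: (changes_interval_le2 a_gt0 ab bn before run) => t /andP[bt].
rewrite leq_eqVlt => /predU1P[->|tn]; first by rewrite yn.
apply/negPn/negP => tX.
have := run_occurrences a_gt0 ab bn before run bX (covered (y t) _) tn erefl; rewrite inE tX; lia.
Qed.

End IsolatedClique.

Lemma isolated_clique_crossing_le2 (V : finType) (E : seq {set V}) n y (X : {set V}) x :
  euler_walk E n y -> (forall v, occ n y v = 2) -> x \in X ->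
  (forall u w, u \in X -> w \notin X -> ~ alternating n y u w) ->
  {in X &, forall c d, c != d -> alternating n y c d} ->
  connected_in E (~: X) -> count (crossing X) E <= 2.
Proof.
move=> walk occ2 xX X_isolated X_clique conn.
have yper := walk_periodic walk.
have [r _ yr] : exists2 r, r < n & y r = x by apply: occ_gt0; rewrite occ2.
have walk_r := euler_walk_shift r walk.
rewrite (walk_crossing walk_r); apply: (isolated_clique_changes_le2 walk_r) => //.
- by move=> v; rewrite occ_shift.
- by move=> u w uX wX /(alternating_shift _ _ _ yper); apply: X_isolated.
- by move=> c d cX dX cd; apply/(alternating_shift _ _ _ yper); apply: X_clique.
- by rewrite add0n yr.
Qed.

Section TripleEdge.
Variables (V : finType) (E : seq {set V}) (n : nat) (y : nat -> V) (a b : V).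
Hypotheses (walk : euler_walk E n y) (occ_a : occ n y a = 2) (ab : a != b).

(* Each traversal of the edge [{a, b}] is one of the four steps entering or leaving
   the two occurrences of [a], so three traversals surround one occurrence by [b]'s. *)
Lemma walk_bab : 3 <= count (pred1 [set a; b]) E ->
  exists r, [/\ y r = b, y r.+1 = a & y r.+2 = b].
Proof.
move=> triple; have yper := walk_periodic walk; have n_gt0 := walk_gt0 walk.
have [p _ yp] : exists2 p, p < n & y p = a by apply: occ_gt0; rewrite occ_a.
set z := fun t => y (t + p).
have walk_z : euler_walk E n z := euler_walk_shift p walk.
have occ_z : occ n z a = 2 by rewrite occ_shift.
have z0 : z 0 = a by rewrite /z add0n.
have [q [qn q0 zq]] := occ2_other occ_z 0.
have z_a t : t < n -> z t = a -> t = q \/ t = 0 := occ2_only occ_z q0 qn n_gt0 zq z0.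
pose hit t := [set z t; z t.+1] == [set a; b].
have : 3 <= count hit [:: n.-1; 0; q.-1; q].
  apply: (leq_trans triple); rewrite (walk_count walk_z).
  apply: count_leq_uniq_sub; first exact: iota_uniq.
  move=> t; rewrite mem_iota add0n !inE => tn /eqP zt_ab.
  have : a \in [set z t; z t.+1] by rewrite zt_ab set21.
  rewrite !inE => /orP[]/eqP/esym za; first by case: (z_a t tn za) => ->; rewrite eqxx /= ?orbT.
  have [t1n|->] : t.+1 < n \/ t = n.-1 by lia.
    case: (z_a _ t1n za) => e; last by lia.
    have -> : t = q.-1 by lia.
    by rewrite eqxx /= ?orbT.
  by rewrite eqxx.
have bab t : hit t -> hit t.+1 -> z t.+1 = a -> exists r, [/\ y r = b, y r.+1 = a & y r.+2 = b].
  move=> /eqP ht /eqP ht1 zt1; exists (t + p); split.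
  - by apply: (set2_eq_set2l ab); rewrite -{1}zt1.
  - by rewrite -addSn.
  - by rewrite -!addSn; apply: (set2_eq_set2r ab); rewrite -{1}zt1.
have zn t : z (t + n) = z t := walk_periodic walk_z t.
move=> /= three; have /orP[/andP[hn h0]|/andP[hq1 hq]] : (hit n.-1 && hit 0) || (hit q.-1 && hit q).
- by move: three; case: (hit n.-1); case: (hit 0); case: (hit q.-1); case: (hit q).
- apply: (bab n.-1 hn); rewrite (prednK n_gt0).
    by rewrite /hit -[n]add0n -addSn !zn.
  by rewrite -[n]add0n zn.
- by apply: (bab q.-1 hq1); rewrite prednK // lt0n.
Qed.

Lemma alternating_of_bab r : y r = b -> y r.+1 = a -> y r.+2 = b -> alternating n y a b.
Proof.
move=> yr yr1 yr2; apply/(@alternating_shift _ n y a b r (walk_periodic walk)).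
set z := fun t => y (t + r).
have occ_z : occ n z a = 2 by rewrite /z occ_shift; [exact: occ_a|exact: walk_periodic walk].
have z0 : z 0 = b by rewrite /z add0n.
have z1 : z 1 = a by rewrite /z add1n.
have z2 : z 2 = b by rewrite /z add2n.
have [q [qn q1 zq]] := occ2_other occ_z 1.
have q_gt2 : 2 < q.
  have : q != 0 by apply: contraNneq ab => e; rewrite -zq e z0.
  have : q != 2 by apply: contraNneq ab => e; rewrite -zq e z2.
  lia.
by exists 0, 1, 2, q; split; [split|right].
Qed.

Lemma triple_edge_alternating : 3 <= count (pred1 [set a; b]) E -> alternating n y a b.
Proof. by move=> /walk_bab[r [yr yr1 yr2]]; apply: (alternating_of_bab yr yr1 yr2). Qed.

End TripleEdge.

Lemma count_set_enum (T : finType) (A : {set T}) (P : pred T) :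
  count P (enum A) = #|[set x in A | P x]|.
Proof.
rewrite setIdE cardE (perm_size (enum_setI A [set x | P x])) size_filter.
by apply: eq_count => x; rewrite inE.
Qed.

Definition rung {k} (i : 'I_k) : {set vert k} := [set p i; p' i].
Definition link {k} (i : 'I_k) : {set vert k} := [set p' i; p (ordS i)].

Section Ladder.
Variable k : nat.
Implicit Types (i j : 'I_k) (v w : vert k) (Et : {set {set vert k}}).

Lemma H_edgesE Et :
  H_edges Et = map rung (enum 'I_k) ++ map link (enum 'I_k) ++ map rung (enum 'I_k) ++ enum Et.
Proof. by rewrite /H_edges /tC_B_edges /C_B_edges -!catA. Qed.

Lemma p_neq_p' i j : p i != p' j.
Proof. by rewrite /p /p' xpair_eqE andbF. Qed.

Lemma mem_rung v i : (v \in rung i) = (v.1 == i).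
Proof. by case: v => j [|]; rewrite !inE /p /p' !xpair_eqE /= ?andbT ?andbF ?orbF. Qed.

Lemma mem_link v i : (v \in link i) = (i == if v.2 then v.1 else ord_pred v.1).
Proof.
case: v => j [|]; rewrite !inE /p /p' !xpair_eqE /= ?andbT ?andbF ?orbF //.
by apply/eqP/eqP => [->|->]; rewrite ?ordSK ?ord_predK.
Qed.

Lemma crossing_rung i j : crossing (rung i) (rung j) = false.
Proof. by rewrite crossing_set2 !mem_rung eqxx. Qed.

Lemma crossing_link i j : crossing (rung i) (link j) = ((j == i) != (ordS j == i)).
Proof. by rewrite crossing_set2 !mem_rung. Qed.

Lemma rung_in_H Et i : rung i \in H_edges Et.
Proof. by rewrite H_edgesE mem_cat; apply/orP; left; apply: map_f; rewrite mem_enum. Qed.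

Lemma link_in_H Et i : link i \in H_edges Et.
Proof. by rewrite H_edgesE !mem_cat; apply/or3P; apply: Or32; apply: map_f; rewrite mem_enum. Qed.

Lemma H_card2 Et : (forall e, e \in Et -> #|e| = 2) -> forall e, e \in H_edges Et -> #|e| = 2.
Proof.
move=> Et2 e; rewrite H_edgesE !mem_cat => /or4P[]/=; last by rewrite mem_enum; apply: Et2.
all: by case/mapP => i _ ->; rewrite cards2 ?p_neq_p' // eq_sym p_neq_p'.
Qed.

Lemma size_H Et : #|Et| = k -> size (H_edges Et) = 4 * k.
Proof.
by move=> Etk; rewrite H_edgesE !size_cat !size_map -enumT size_enum_ord -cardE Etk; lia.
Qed.

Lemma count_enum_ord (P : pred 'I_k) j : (forall i, P i = (i == j)) -> count P (enum 'I_k) = 1.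
Proof.
move=> Pj; rewrite (eq_count (a2 := pred1 j)) => [|i]; last exact: Pj.
by rewrite count_uniq_mem ?enum_uniq // mem_enum.
Qed.

Lemma degree_H Et : (forall v, #|[set e in Et | v \in e]| = 1) ->
  forall v, count (fun e : {set vert k} => v \in e) (H_edges Et) = 4.
Proof.
move=> Et_cover v; rewrite H_edgesE !count_cat !count_map -enumT count_set_enum Et_cover.
rewrite (@count_enum_ord _ v.1) => [|i]; last by rewrite /= mem_rung eq_sym.
by rewrite (@count_enum_ord _ (if v.2 then v.1 else ord_pred v.1)) => // i; rewrite /= mem_link.
Qed.

Lemma count_crossing_rungs i :
  count (crossing (rung i)) (map rung (enum 'I_k)) = 0.
Proof.
by rewrite count_map (eq_count (a2 := pred0)) ?count_pred0 // => j /=; rewrite crossing_rung.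
Qed.

Lemma crossing_canon_le2 i : count (crossing (rung i)) (H_edges (canon_match k)) <= 2.
Proof.
have canon0 : count (crossing (rung i)) (enum (canon_match k)) = 0.
  rewrite (eq_in_count (a2 := pred0)) ?count_pred0 // => e.
  by rewrite mem_enum => /imsetP[j _ ->]; rewrite /= crossing_rung.
rewrite H_edgesE !count_cat !count_crossing_rungs canon0 count_map add0n !addn0.
apply: leq_trans (count_size (preim link (crossing (rung i))) [:: i; ord_pred i]).
apply: count_leq_uniq_sub => [|j _]; first exact: enum_uniq.
rewrite /= crossing_link !inE; case: (j =P i) => //= _ /negPn/eqP <-.
by rewrite ordSK eqxx.
Qed.

Lemma rung_mult_canon i : 3 <= count (pred1 (rung i)) (H_edges (canon_match k)).
Proof.
have rungs : 1 <= count (pred1 (rung i)) (map rung (enum 'I_k)).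
  rewrite -has_count; apply/hasP; exists (rung i); last exact: eqxx.
  by apply/mapP; exists i; rewrite ?mem_enum.
have canon : 1 <= count (pred1 (rung i)) (enum (canon_match k)).
  rewrite -has_count; apply/hasP; exists (rung i); last exact: eqxx.
  by rewrite mem_enum imset_f.
rewrite H_edgesE !count_cat; lia.
Qed.

Lemma ordS_neq i : 1 < k -> ordS i != i.
Proof.
move=> k_gt1; rewrite -(inj_eq val_inj) /=.
have [ik|] := ltnP i.+1 k; first by rewrite modn_small // gtn_eqF.
move=> ki; have ik : i.+1 = k by have := ltn_ord i; lia.
by rewrite ik modnn; apply/eqP; lia.
Qed.

Lemma ord_pred_neq i : 1 < k -> ord_pred i != i.
Proof.
by move=> k_gt1; apply: contraNneq (ordS_neq (ord_pred i) k_gt1) => e; rewrite ord_predK e.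
Qed.

Lemma set2_rung v w : v != w -> v.1 = w.1 -> [set v; w] = rung v.1.
Proof.
case: v w => [i [|]] [j [|]] /= vw ij; subst j; rewrite ?eqxx // in vw.
by rewrite setUC.
Qed.

Lemma matching_partner Et : (forall e, e \in Et -> #|e| = 2) ->
  (forall v, #|[set e in Et | v \in e]| = 1) -> forall v, exists2 w, w != v & [set v; w] \in Et.
Proof.
move=> Et2 Et_cover v; have /cards1P[e ve] : #|[set e in Et | v \in e]| == 1 by rewrite Et_cover.
have : e \in [set e in Et | v \in e] by rewrite ve set11.
rewrite inE => /andP[eEt v_e]; have /cards2P[a [b [ab e_ab]]] : #|e| == 2 by rewrite Et2.
move: v_e; rewrite e_ab !inE => /orP[]/eqP->.
  by exists b; [rewrite eq_sym | rewrite -e_ab].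
by exists a; [|rewrite setUC -e_ab].
Qed.

Section OffMatching.
Variables (Et : {set {set vert k}}) (i : 'I_k).
Hypotheses (Et2 : forall e, e \in Et -> #|e| = 2)
  (Et_cover : forall v, #|[set e in Et | v \in e]| = 1) (rung_notin : rung i \notin Et).

Lemma partner_off_rung v : v.1 = i -> exists2 w, w.1 != i & [set v; w] \in Et.
Proof.
move=> vi; have [w wv vwEt] := matching_partner Et2 Et_cover v.
exists w => //; apply: contraNneq rung_notin => wi.
have vw1 : v.1 = w.1 by rewrite vi wi.
by rewrite -vi -(set2_rung _ vw1) // eq_sym.
Qed.

Lemma off_matching_k_gt1 : 1 < k.
Proof.
have [w wi _] := partner_off_rung (erefl : (p i).1 = i).
by have := ltn_ord i; have := ltn_ord w.1; move: wi; rewrite -(inj_eq val_inj) /=; lia.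
Qed.

Lemma crossing_off_matching : 4 <= count (crossing (rung i)) (H_edges Et).
Proof.
have k_gt1 := off_matching_k_gt1.
have [w wi e_Et] := partner_off_rung (erefl : (p i).1 = i).
have [w' w'i e'_Et] := partner_off_rung (erefl : (p' i).1 = i).
have ee' : [set p i; w] != [set p' i; w'].
  apply: contraNneq wi => ee'; have : p' i \in [set p i; w] by rewrite ee' set21.
  by rewrite !inE eq_sym (negbTE (p_neq_p' i i)) => /eqP <-.
have links : 2 <= count (crossing (rung i)) (map link (enum 'I_k)).
  rewrite count_map; apply: leq_trans (count_leq_uniq_sub (P := preim link (crossing (rung i)))
    (r := enum 'I_k) (_ : uniq [:: i; ord_pred i]) _).
  - rewrite /= !crossing_link ord_predK eqxx (negbTE (ordS_neq i k_gt1)).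
    by rewrite (negbTE (ord_pred_neq i k_gt1)).
  - by rewrite /= inE eq_sym ord_pred_neq.
  - by move=> j _ _; rewrite mem_enum.
have matched : 2 <= count (crossing (rung i)) (enum Et).
  apply: leq_trans (count_leq_uniq_sub (P := crossing (rung i)) (r := enum Et)
    (_ : uniq [:: [set p i; w]; [set p' i; w']]) _).
  - by rewrite /= !crossing_set2 !mem_rung eqxx (negbTE wi) (negbTE w'i).
  - by rewrite /= inE ee'.
  - by move=> e; rewrite !inE mem_enum => /orP[]/eqP->.
by rewrite H_edgesE !count_cat; lia.
Qed.

End OffMatching.

Lemma iter_ordS_val i m : val (iter m (@ordS k) i) = (i + m) %% k.
Proof.
elim: m => [|m IH]; first by rewrite addn0 modn_small.
by rewrite iterS /= IH -addn1 modnDml addn1 addnS.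
Qed.

Lemma iter_ordS_neq i m : 0 < m < k -> iter m (@ordS k) i != i.
Proof.
case/andP=> m_gt0 mk; rewrite -(inj_eq val_inj) iter_ordS_val /=.
rewrite -{2}(modn_small (ltn_ord i)) -{2}[val i]addn0 eqn_modDl mod0n modn_small //.
by rewrite -lt0n.
Qed.

Lemma iter_ordS_onto i j : exists2 m, m < k & j = iter m (@ordS k) i.
Proof.
exists ((j + (k - i)) %% k); first by rewrite ltn_mod; case: k i {j} => [[]|].
apply: val_inj; rewrite iter_ordS_val modnDmr.
have -> : i + (j + (k - i)) = j + k by have := ltn_ord i; lia.
by rewrite modnDr modn_small.
Qed.

Lemma connected_off_rung Et i : connected_in (H_edges Et) (~: rung i).
Proof.
move=> S [v0 v0_off Sv0] S_closed.
have off j b : j != i -> ((j, b) : vert k) \in ~: rung i by rewrite inE mem_rung.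
have rungS j : j != i -> S (p j) <-> S (p' j).
  move=> ji; split=> [Spj|Sp'j].
    by apply: (S_closed _ _ Spj (off _ _ ji)); apply: rung_in_H.
  by apply: (S_closed _ _ Sp'j (off _ _ ji)); rewrite setUC; apply: rung_in_H.
have linkS j : j != i -> ordS j != i -> S (p j) <-> S (p (ordS j)).
  move=> ji j1i; rewrite rungS //; split=> [Sp'j|Spj1].
    by apply: (S_closed _ _ Sp'j (off _ _ j1i)); apply: link_in_H.
  by apply: (S_closed _ _ Spj1 (off _ _ ji)); rewrite setUC; apply: link_in_H.
have chain m : 0 < m < k -> S (p (iter m (@ordS k) i)) <-> S (p (ordS i)).
  elim: m => [//|[//|m] IH] /andP[_ mk].
  have n1 : iter m.+1 (@ordS k) i != i by apply: iter_ordS_neq; lia.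
  have n2 : iter m.+2 (@ordS k) i != i by apply: iter_ordS_neq; lia.
  by rewrite -IH ?(linkS _ n1 n2) //; lia.
have onto j : j != i -> exists2 m, 0 < m < k & j = iter m (@ordS k) i.
  move=> ji; have [m mk jm] := iter_ordS_onto i j.
  by exists m => //; rewrite mk andbT lt0n; apply: contraNneq ji => m0; rewrite jm m0.
have v0i : v0.1 != i by move: v0_off; rewrite inE mem_rung.
have Sp0 : S (p v0.1) by case: v0 v0_off Sv0 v0i => j0 [] //= _ Sp'j0 j0i; rewrite rungS.
have Sp j : j != i -> S (p j).
  move=> ji; have [m mk ->] := onto j ji; have [m0 m0k v0m] := onto _ v0i.
  by rewrite chain // -(chain m0) // -v0m.
move=> [j b]; rewrite inE mem_rung /= => ji.
by case: b; [apply/(rungS _ ji)|]; exact: Sp.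
Qed.

End Ladder.

Lemma rung_inj k : injective (@rung k).
Proof. by move=> i j /setP/(_ (p i)); rewrite !mem_rung eqxx => /esym/eqP. Qed.

Lemma canon_match_eq k (Et : {set {set vert k}}) :
  #|Et| = k -> (forall i, rung i \in Et) -> Et = canon_match k.
Proof.
move=> Etk rungs; apply/esym/eqP; rewrite eqEcard card_imset; last exact: rung_inj.
rewrite card_ord Etk leqnn andbT.
by apply/subsetP => e /imsetP[i _ ->]; apply: rungs.
Qed.

Section Tour.
Variables (k : nat) (Et : {set {set vert k}}) (xs : seq (vert k)) (es : seq nat).
Hypotheses (hk : 1 <= k) (Et2 : forall e, e \in Et -> #|e| = 2) (Etk : #|Et| = k)
  (Et_cover : forall v : vert k, #|[set e in Et | v \in e]| = 1)
  (tour : eulerian_tour (H_edges Et) xs es).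

Let n := size xs.
Let y t := nth (p (Ordinal hk)) xs (t %% n).

Lemma tour_walk : euler_walk (H_edges Et) n y.
Proof.
apply: eulerian_tour_walk (H_card2 Et2) _ tour.
by rewrite (eulerian_tour_size tour) size_H //; lia.
Qed.

Lemma tour_occ2 v : occ n y v = 2.
Proof. by have := walk_degree tour_walk v; rewrite degree_H //; lia. Qed.

Lemma alternance_tour u v : alternance xs u v <-> u <> v /\ alternating n y u v.
Proof. by rewrite /alternance (alternate_cyclic_word (p (Ordinal hk))). Qed.

Lemma canon_alternance : Et = canon_match k -> forall u v, alternance xs u v <-> G_B u v.
Proof.
move=> Et_canon u v; rewrite alternance_tour; split=> [[uv alt_uv]|[uv uv1]]; split => //.
  apply/eqP; apply: contraT => uv1.
  have := crossing_canon_le2 u.1; rewrite -Et_canon (walk_crossing tour_walk).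
  have := changes_alternating (P := mem (rung u.1)) (walk_closed tour_walk) _ alt_uv.
  by rewrite /= !mem_rung eqxx [v.1 == _]eq_sym (negbTE uv1) => /(_ isT); lia.
have uv' : u != v by apply/eqP.
have := rung_mult_canon u.1; rewrite -Et_canon -(set2_rung uv' uv1) => mult.
exact: triple_edge_alternating tour_walk (tour_occ2 u) uv' mult.
Qed.

Lemma alternance_rungs : (forall u v, alternance xs u v <-> G_B u v) -> forall i, rung i \in Et.
Proof.
move=> A_GB i; apply/negPn/negP => rung_notin.
have := crossing_off_matching Et2 Et_cover rung_notin.
suff : count (crossing (rung i)) (H_edges Et) <= 2 by lia.
apply: (@isolated_clique_crossing_le2 _ _ _ _ (rung i) (p i) tour_walk tour_occ2);
  last exact: connected_off_rung.
- by rewrite mem_rung.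
- move=> u w uX wX alt_uw; have uw : u <> w by move=> e; rewrite e (negbTE wX) in uX.
  have [_ uw1] := (A_GB u w).1 (proj2 (alternance_tour u w) (conj uw alt_uw)).
  by rewrite mem_rung in uX; rewrite mem_rung -uw1 uX in wX.
- move=> c d; rewrite !mem_rung => /eqP ci /eqP di /eqP cd.
  by case: ((alternance_tour c d).1 ((A_GB c d).2 (conj cd (etrans ci (esym di))))).
Qed.

End Tour.

Theorem mainTheorem2 (k : nat) (hk : 1 <= k) (Et : {set {set vert k}})
  (hEt_edges : forall e, e \in Et -> #|e| = 2)
  (hEt_card : #|Et| = k)
  (hEt_cover : forall v : vert k, #|[set e in Et | v \in e]| = 1)
  (xs : seq (vert k)) (es : seq nat)
  (hU : eulerian_tour (H_edges Et) xs es) :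
  (forall u v : vert k, alternance xs u v <-> G_B u v) <-> Et = canon_match k.
Proof.
split; last exact: canon_alternance hk hEt_edges hEt_card hEt_cover hU.
move=> A_GB; apply: (canon_match_eq hEt_card).
exact: alternance_rungs hk hEt_edges hEt_card hEt_cover hU A_GB.
Qed.
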